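(* Let $n_{xL},n_{yL},n_{xR},n_{yR}\ge 2$ and let $h_{xL},h_{xR}>0$. Assume: (i) $H_{xL}\in\mathbb{R}^{n_{xL}\times n_{xL}}$, $H_{yL}\in\mathbb{R}^{n_{yL}\times n_{yL}}$, $H_{xR}\in\mathbb{R}^{n_{xR}\times n_{xR}}$, $H_{yR}\in\mathbb{R}^{n_{yR}\times n_{yR}}$ are diagonal positive definite; (ii) $M_{xL}, M_{xR}$ are symmetric and can be written as $M_{xL}=\tilde M_{xL}+h_{xL}\alpha(E_{0L}S_{xL})^T(E_{0L}S_{xL})$, $M_{xR}=\tilde M_{xR}+h_{xR}\alpha(E_{0R}S_{xR})^T(E_{0R}S_{xR})$ with $\tilde M_{xL},\tilde M_{xR}$ symmetric positive semidefinite and a constant $\alpha>0$, where $S_{xL}\in\mathbb{R}^{n_{xL}\times n_{xL}}$, $S_{xR}\in\mathbb{R}^{n_{xR}\times n_{xR}}$ are arbitrary real matrices; (iii) $I_{F2C}\in\mathbb{R}^{n_{yL}\times n_{yR}}$, $I_{C2F}\in\mathbb{R}^{n_{yR}\times n_{yL}}$ satisfy $H_{yR}I_{C2F}=(H_{yL}I_{F2C})^T$ and both $H_{yL}(I_{yL}-I_{F2C}I_{C2F})$ and $H_{yR}(I_{yR}-I_{C2F}I_{F2C})$ are positive semidefinite; (iv) $\tau\ge\max\big(\frac{1}{2\alpha h_{xL}},\frac{1}{2\alpha h_{xR}}\big)$ (in particular, if $h_{xR}=h_{xL}/2$ this reads $\tau\ge \frac{1}{\alpha h_{xL}}$). Consider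 the semidiscrete system (boldface denotes Kronecker extension: $\mathbf{A}_{xL}=A_{xL}\otimes I_{yL}$, $\mathbf{A}_{xR}=A_{xR}\otimes I_{yR}$) $$\mathbf{u}_{tt}=\big(H_{xL}^{-1}(-M_{xL}+E_{0L}S_{xL})\otimes I_{yL}\big)\mathbf{u}+\tfrac12\mathbf{H}_{xL}^{-1}\mathbf{S}_{xL}^T\mathbf{w}_L-\tau\mathbf{H}_{xL}^{-1}\mathbf{w}_L-\tfrac12\mathbf{H}_{xL}^{-1}\big(\mathbf{E}_{0L}\mathbf{S}_{xL}\mathbf{u}-(E_{LR}\otimes I_{F2C})\mathbf{S}_{xR}\mathbf{v}\big),$$ $$\mathbf{v}_{tt}=\big(H_{xR}^{-1}(-M_{xR}-E_{0R}S_{xR})\otimes I_{yR}\big)\mathbf{v}-\tfrac12\mathbf{H}_{xR}^{-1}\mathbf{S}_{xR}^T\mathbf{w}_R-\tau\mathbf{H}_{xR}^{-1}\mathbf{w}_R+\tfrac12\mathbf{H}_{xR}^{-1}\big(\mathbf{E}_{0R}\mathbf{S}_{xR}\mathbf{v}-(E_{RL}\otimes I_{C2F})\mathbf{S}_{xL}\mathbf{u}\big),$$ where $\mathbf{w}_L=\mathbf{E}_{0L}\mathbf{u}-(E_{LR}\otimes I_{F2C})\mathbf{v}$ and $\mathbf{w}_R=\mathbf{E}_{0R}\mathbf{v}-(E_{RL}\otimes I_{C2F})\mathbf{u}$. Define $$\begin{aligned}E=&\ \mathbf{u}_t^T(H_{xL}\otimes H_{yL})\mathbf{u}_t+\mathbf{v}_t^T(H_{xR}\otimes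 H_{yR})\mathbf{v}_t\\&+\mathbf{u}^T(M_{xL}\otimes H_{yL})\mathbf{u}-\mathbf{u}^T(E_{0L}S_{xL}\otimes H_{yL})\mathbf{u}+\tau\mathbf{u}^T(E_{0L}\otimes H_{yL})\mathbf{u}\\&+\mathbf{v}^T(M_{xR}\otimes H_{yR})\mathbf{v}+\mathbf{v}^T(E_{0R}S_{xR}\otimes H_{yR})\mathbf{v}+\tau\mathbf{v}^T(E_{0R}\otimes H_{yR})\mathbf{v}\\&+\mathbf{u}^T(S_{xL}^TE_{LR}\otimes H_{yL}I_{F2C})\mathbf{v}-\mathbf{v}^T(S_{xR}^TE_{RL}\otimes H_{yR}I_{C2F})\mathbf{u}-2\tau\mathbf{u}^T(E_{LR}\otimes H_{yL}I_{F2C})\mathbf{v}.\end{aligned}$$ Then $E\ge 0$ for all $\mathbf{u},\mathbf{u}_t\in\mathbb{R}^{n_{xL}n_{yL}}$, $\mathbf{v},\mathbf{v}_t\in\mathbb{R}^{n_{xR}n_{yR}}$, and $\frac{d}{dt}E=0$ along every smooth solution of the system; hence $E$ is a conserved nonnegative discrete energy (an energy estimate holds).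
   Context: This is the summation-by-parts / simultaneous-approximation-term (SBP–SAT) discretization of the 2D wave equation $U_{tt}=U_{xx}+U_{yy}$ on two blocks (left block $n_{xL}\times n_{yL}$ grid, right block $n_{xR}\times n_{yR}$ grid) meeting at a vertical interface (right edge of the left block, left edge of the right block); only $x$-direction terms and interface coupling terms are retained (outer boundary terms and $y$-derivative terms are omitted). Grid vectors use the $x$-index as the outer Kronecker index. $E_{0L}\in\mathbb{R}^{n_{xL}\times n_{xL}}$ has a single nonzero entry $1$ at $(n_{xL},n_{xL})$; $E_{0R}\in\mathbb{R}^{n_{xR}\times n_{xR}}$ has a single nonzero entry $1$ at $(1,1)$; $E_{LR}\in\mathbb{R}^{n_{xL}\times n_{xR}}$ has a single nonzero entry $1$ at $(n_{xL},1)$; $E_{RL}=E_{LR}^T$. $I_{xL},I_{yL},I_{xR},I_{yR}$ are identity matrices of the indicated sizes. In the SBP setting $H_{x}$ is the SBP norm, $D_2=H_x^{-1}(-M+BS)$ is the second-derivative SBP operator with $S$ approximating the first derivative at the boundary, $\tau$ is the interface penalty parameter, and $I_{F2C},I_{C2F}$ are interface interpolation operators between the coarse (left) and fine (right) interface grids; hypothesis (ii) is the so-called borrowing property of $M$. *)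

(* real analysis (time derivatives) is needed, so matrices are
   represented as functions nat -> nat -> R with explicit dimensions,
   0-based indices, and finite sums rsum. *)
From Stdlib Require Import Reals Arith.
Open Scope R_scope.

Fixpoint rsum (n : nat) (f : nat -> R) : R :=
  match n with O => 0 | S k => rsum k f + f k end.

Definition mat := nat -> nat -> R.
Definition vec := nat -> R.

Definition mmul (k : nat) (A B : mat) : mat := fun i j => rsum k (fun l => A i l * B l j).
Definition mvec (k : nat) (A : mat) (x : vec) : vec := fun i => rsum k (fun j => A i j * x j).
Definition dot (n : nat) (x y : vec) : R := rsum n (fun i => x i * y i).
Definition bform (m n : nat) (x : vec) (A : mat) (y : vec) : R := dot m x (mvec n A y).
Definition qform (n : nat) (A : mat) (x : vec) : R := bform n n x A x.

Definition tr (A : mat) : mat := fun i j => A j i.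
Definition madd (A B : mat) : mat := fun i j => A i j + B i j.
Definition mopp (A : mat) : mat := fun i j => - A i j.
Definition mscale (c : R) (A : mat) : mat := fun i j => c * A i j.
Definition vadd (x y : vec) : vec := fun i => x i + y i.
Definition vopp (x : vec) : vec := fun i => - x i.
Definition vscale (c : R) (x : vec) : vec := fun i => c * x i.
Definition vsub (x y : vec) : vec := vadd x (vopp y).

Definition idm : mat := fun i j => if Nat.eqb i j then 1 else 0.
Definition unitm (a b : nat) : mat :=
  fun i j => if andb (Nat.eqb i a) (Nat.eqb j b) then 1 else 0.
Definition diag_inv (A : mat) : mat := fun i j => if Nat.eqb i j then / A i i else 0.

(* Kronecker product A (x) B where B is p x q; the index of A is the outer one:
   (A (x) B)(i,j) = A(i/p, j/q) * B(i mod p, j mod q). *)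
Definition kron (p q : nat) (A B : mat) : mat :=
  fun i j => A (i / p)%nat (j / q)%nat * B (i mod p)%nat (j mod q)%nat.

(* E_{0L} (n x n, entry (n,n) in 1-based), E_{0R} (entry (1,1)),
   E_{LR} (nL x nR, entry (nL,1)) *)
Definition E0L (nxL : nat) : mat := unitm (nxL - 1) (nxL - 1).
Definition E0R : mat := unitm 0 0.
Definition ELR (nxL : nat) : mat := unitm (nxL - 1) 0.
Definition ERL (nxL : nat) : mat := tr (ELR nxL).

Definition mat_eq (m n : nat) (A B : mat) : Prop :=
  forall i j, (i < m)%nat -> (j < n)%nat -> A i j = B i j.
Definition is_symm (n : nat) (A : mat) : Prop :=
  forall i j, (i < n)%nat -> (j < n)%nat -> A i j = A j i.
Definition is_psd (n : nat) (A : mat) : Prop := forall x : vec, 0 <= qform n A x.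
Definition is_diag_pd (n : nat) (A : mat) : Prop :=
  (forall i j, (i < n)%nat -> (j < n)%nat -> i <> j -> A i j = 0) /\
  (forall i, (i < n)%nat -> 0 < A i i).

Definition rhs_u (nxL nyL nxR nyR : nat) (HxL MxL SxL SxR IF2C : mat) (tau : R)
  (u v : vec) : vec :=
  let NL := (nxL * nyL)%nat in
  let NR := (nxR * nyR)%nat in
  let bI A := kron nyL nyL A idm in
  let HiL := bI (diag_inv HxL) in
  let ELRF := kron nyL nyR (ELR nxL) IF2C in
  let SRb := kron nyR nyR SxR idm in
  let wL := vsub (mvec NL (bI (E0L nxL)) u) (mvec NR ELRF v) in
  vadd (vadd (vadd
    (mvec NL (bI (mmul nxL (diag_inv HxL) (madd (mopp MxL) (mmul nxL (E0L nxL) SxL)))) u)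
    (vscale (1/2) (mvec NL HiL (mvec NL (bI (tr SxL)) wL))))
    (vopp (vscale tau (mvec NL HiL wL))))
    (vopp (vscale (1/2) (mvec NL HiL
       (vsub (mvec NL (bI (E0L nxL)) (mvec NL (bI SxL) u)) (mvec NR ELRF (mvec NR SRb v)))))).

Definition rhs_v (nxL nyL nxR nyR : nat) (HxR MxR SxL SxR IC2F : mat) (tau : R)
  (u v : vec) : vec :=
  let NL := (nxL * nyL)%nat in
  let NR := (nxR * nyR)%nat in
  let bI A := kron nyR nyR A idm in
  let HiR := bI (diag_inv HxR) in
  let ERLC := kron nyR nyL (ERL nxL) IC2F in
  let SLb := kron nyL nyL SxL idm in
  let wR := vsub (mvec NR (bI E0R) v) (mvec NL ERLC u) in
  vadd (vadd (vadd
    (mvec NR (bI (mmul nxR (diag_inv HxR) (madd (mopp MxR) (mopp (mmul nxR E0R SxR))))) v)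
    (vopp (vscale (1/2) (mvec NR HiR (mvec NR (bI (tr SxR)) wR)))))
    (vopp (vscale tau (mvec NR HiR wR))))
    (vscale (1/2) (mvec NR HiR
       (vsub (mvec NR (bI E0R) (mvec NR (bI SxR) v)) (mvec NL ERLC (mvec NL SLb u))))).

Definition energy (nxL nyL nxR nyR : nat)
  (HxL HyL HxR HyR MxL MxR SxL SxR IF2C IC2F : mat) (tau : R)
  (u ut v vt : vec) : R :=
  let NL := (nxL * nyL)%nat in
  let NR := (nxR * nyR)%nat in
  qform NL (kron nyL nyL HxL HyL) ut + qform NR (kron nyR nyR HxR HyR) vt
  + qform NL (kron nyL nyL MxL HyL) u
  - qform NL (kron nyL nyL (mmul nxL (E0L nxL) SxL) HyL) u
  + tau * qform NL (kron nyL nyL (E0L nxL) HyL) u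
  + qform NR (kron nyR nyR MxR HyR) v
  + qform NR (kron nyR nyR (mmul nxR E0R SxR) HyR) v
  + tau * qform NR (kron nyR nyR E0R HyR) v
  + bform NL NR u (kron nyL nyR (mmul nxL (tr SxL) (ELR nxL)) (mmul nyL HyL IF2C)) v
  - bform NR NL v (kron nyR nyL (mmul nxR (tr SxR) (ERL nxL)) (mmul nyR HyR IC2F)) u
  - 2 * tau * bform NL NR u (kron nyL nyR (ELR nxL) (mmul nyL HyL IF2C)) v.

From Stdlib Require Import Reals Arith Lia Lra FunctionalExtensionality.
Open Scope R_scope.

(* Every Kronecker matrix of the scheme acts line by line: [A (x) D] with [D] diagonal acts on
   the x-line through each y-node, and the interface blocks [E_LR (x) I_F2C], [E_RL (x) I_C2F]
   only couple the last x-line of u with the first x-line of v.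

   Nonnegativity: split [M = M~ + h alpha (E_0 S)^T (E_0 S)].  At each interface node the
   remaining terms form [h alpha s^2 - s w + tau/2 w^2] in the boundary derivative [s] and the
   jump [w] across the interface, which is nonnegative as [2 h alpha tau >= 1]; the [tau]-terms
   left over are [tau/2] times the interpolation defects of (iii).  The adjointness
   [H_yR I_C2F = (H_yL I_F2C)^T] identifies the two mixed interface terms.

   Conservation: [dE/dt = u_t . G_u + v_t . G_v] with [G_u], [G_v] linear in the state and the
   accelerations; inserting the semidiscrete equations, every entry of [G_u] and [G_v]
   vanishes, again by the adjointness. *)

Lemma rsum_ext n f g : (forall i, (i < n)%nat -> f i = g i) -> rsum n f = rsum n g.
Proof.
  induction n as [|n IH]; intros H; simpl; [reflexivity|].
  rewrite IH by (intros; apply H; lia); rewrite H by lia; reflexivity.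
Qed.

Lemma rsum_plus n f g : rsum n (fun i => f i + g i) = rsum n f + rsum n g.
Proof. induction n; simpl; [ring | rewrite IHn; ring]. Qed.

Lemma rsum_minus n f g : rsum n (fun i => f i - g i) = rsum n f - rsum n g.
Proof. induction n; simpl; [ring | rewrite IHn; ring]. Qed.

Lemma rsum_scal n c f : rsum n (fun i => c * f i) = c * rsum n f.
Proof. induction n; simpl; [ring | rewrite IHn; ring]. Qed.

Lemma rsum_eq0 n f : (forall i, (i < n)%nat -> f i = 0) -> rsum n f = 0.
Proof.
  intros H; rewrite (rsum_ext n f (fun _ => 0)) by auto.
  clear H; induction n; simpl; [|rewrite IHn]; ring.
Qed.

Lemma rsum_nonneg n f : (forall i, (i < n)%nat -> 0 <= f i) -> 0 <= rsum n f.
Proof.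
  induction n as [|n IH]; intros H; simpl; [lra|].
  apply Rplus_le_le_0_compat; [apply IH; intros|]; apply H; lia.
Qed.

Lemma rsum_swap m n f :
  rsum m (fun i => rsum n (fun j => f i j)) = rsum n (fun j => rsum m (fun i => f i j)).
Proof.
  induction m as [|m IH]; simpl.
  - symmetry; apply rsum_eq0; reflexivity.
  - rewrite IH, <- rsum_plus; reflexivity.
Qed.

Lemma rsum_add n k f : rsum (n + k) f = rsum n f + rsum k (fun i => f (n + i)%nat).
Proof.
  induction k as [|k IH]; simpl.
  - rewrite Nat.add_0_r; ring.
  - rewrite Nat.add_succ_r; simpl; rewrite IH; ring.
Qed.

Lemma rsum_mul m p f :
  rsum (m * p) f = rsum m (fun a => rsum p (fun b => f (a * p + b)%nat)).
Proof. induction m; simpl; [reflexivity|]. rewrite Nat.add_comm, rsum_add, IHm; reflexivity. Qed.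

Lemma rsum_single n k f :
  (k < n)%nat -> (forall i, (i < n)%nat -> i <> k -> f i = 0) -> rsum n f = f k.
Proof.
  induction n as [|n IH]; intros Hk H; [lia|]; simpl.
  destruct (Nat.eq_dec k n) as [->|Hne].
  - rewrite rsum_eq0; [ring|]. intros; apply H; lia.
  - rewrite IH by (lia || (intros; apply H; lia)); rewrite (H n) by lia; ring.
Qed.

Definition kdelta (k i : nat) : R := if Nat.eqb i k then 1 else 0.

Lemma kdelta_eq k : kdelta k k = 1.
Proof. unfold kdelta; rewrite Nat.eqb_refl; reflexivity. Qed.

Lemma kdelta_neq k i : i <> k -> kdelta k i = 0.
Proof. intros; unfold kdelta; destruct (Nat.eqb_spec i k); [lia | reflexivity]. Qed.

Lemma rsum_kdelta n k f : (k < n)%nat -> rsum n (fun i => kdelta k i * f i) = f k.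
Proof.
  intros Hk; rewrite (rsum_single n k), kdelta_eq; [ring | exact Hk |].
  intros; rewrite kdelta_neq by assumption; ring.
Qed.

Lemma vadd_apply x y i : vadd x y i = x i + y i.
Proof. reflexivity. Qed.

Lemma vopp_apply x i : vopp x i = - x i.
Proof. reflexivity. Qed.

Lemma vscale_apply c x i : vscale c x i = c * x i.
Proof. reflexivity. Qed.

Lemma vsub_apply x y i : vsub x y i = x i - y i.
Proof. reflexivity. Qed.

Lemma dot_comm n x y : dot n x y = dot n y x.
Proof. unfold dot; apply rsum_ext; intros; ring. Qed.

Lemma dot_kdelta n k x : (k < n)%nat -> dot n (kdelta k) x = x k.
Proof. apply rsum_kdelta. Qed.

Lemma dot_vadd n x f g : dot n x (vadd f g) = dot n x f + dot n x g.
Proof. unfold dot, vadd; rewrite <- rsum_plus; apply rsum_ext; intros; ring. Qed.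

Lemma dot_vopp n x f : dot n x (vopp f) = - dot n x f.
Proof.
  unfold dot, vopp; rewrite <- (Rmult_1_l (rsum n (fun i => x i * f i))), Ropp_mult_distr_l.
  rewrite <- rsum_scal.
  apply rsum_ext; intros; ring.
Qed.

Lemma dot_vscale n x c f : dot n x (vscale c f) = c * dot n x f.
Proof. unfold dot, vscale; rewrite <- rsum_scal; apply rsum_ext; intros; ring. Qed.

Lemma dot_vsub n x f g : dot n x (vsub f g) = dot n x f - dot n x g.
Proof. unfold vsub; rewrite dot_vadd, dot_vopp; ring. Qed.

Lemma dot_eq0 n x f : (forall i, (i < n)%nat -> f i = 0) -> dot n x f = 0.
Proof. intros H; apply rsum_eq0; intros; rewrite H by assumption; ring. Qed.

Definition outer (f g : vec) : mat := fun i j => f i * g j.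

Definition diagonal (n : nat) (D : mat) : Prop :=
  forall i j, (i < n)%nat -> (j < n)%nat -> i <> j -> D i j = 0.

Definition msym (A : mat) : mat := madd A (tr A).

Lemma tr_tr A : tr (tr A) = A.
Proof. reflexivity. Qed.

Lemma tr_outer f g : tr (outer f g) = outer g f.
Proof. unfold tr, outer; do 2 (apply functional_extensionality; intro); ring. Qed.

Lemma tr_kron p q A B : tr (kron p q A B) = kron q p (tr A) (tr B).
Proof. reflexivity. Qed.

Lemma unitm_outer a b : unitm a b = outer (kdelta a) (kdelta b).
Proof.
  unfold unitm, outer, kdelta; do 2 (apply functional_extensionality; intro).
  destruct (Nat.eqb _ a), (Nat.eqb _ b); simpl; ring.
Qed.

Lemma tr_unitm a b : tr (unitm a b) = unitm b a.
Proof. rewrite !unitm_outer; apply tr_outer. Qed.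

Lemma mmul_outer_l m f g A : mmul m (outer f g) A = outer f (fun j => dot m g (fun l => A l j)).
Proof.
  unfold mmul, outer, dot; do 2 (apply functional_extensionality; intro).
  rewrite <- rsum_scal; apply rsum_ext; intros; ring.
Qed.

Lemma mmul_outer_r m f g A : mmul m A (outer f g) = outer (fun i => dot m (A i) f) g.
Proof.
  unfold mmul, outer, dot; do 2 (apply functional_extensionality; intro).
  rewrite (Rmult_comm _ (g _)), <- rsum_scal; apply rsum_ext; intros; ring.
Qed.

Lemma mmul_unitm_l m i k A : (k < m)%nat -> mmul m (unitm i k) A = outer (kdelta i) (A k).
Proof.
  intros Hk; rewrite unitm_outer, mmul_outer_l; f_equal.
  apply functional_extensionality; intros; rewrite dot_kdelta by exact Hk; reflexivity.
Qed.

Lemma mmul_tr_unitm m k j A : (k < m)%nat -> mmul m (tr A) (unitm k j) = outer (A k) (kdelta j).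
Proof.
  intros Hk; rewrite unitm_outer, mmul_outer_r; f_equal.
  apply functional_extensionality; intros; rewrite dot_comm, dot_kdelta by exact Hk; reflexivity.
Qed.

Lemma diag_inv_diag H a : diag_inv H a a = / H a a.
Proof. unfold diag_inv; rewrite Nat.eqb_refl; reflexivity. Qed.

Lemma diagonal_tr n D : diagonal n D -> diagonal n (tr D).
Proof. intros H i j Hi Hj Hij; apply H; auto. Qed.

Lemma diagonal_idm n : diagonal n idm.
Proof. intros i j _ _ Hij; unfold idm; destruct (Nat.eqb_spec i j); [lia | reflexivity]. Qed.

Lemma diagonal_diag_inv n H : diagonal n (diag_inv H).
Proof. intros i j _ _ Hij; unfold diag_inv; destruct (Nat.eqb_spec i j); [lia | reflexivity]. Qed.

Lemma mat_eq_tr m n A B : mat_eq m n A B -> mat_eq n m (tr A) (tr B).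
Proof. intros H i j Hi Hj; apply H; assumption. Qed.

Lemma mat_eq_tr_sym m n A B : mat_eq m n A (tr B) -> mat_eq n m B (tr A).
Proof. intros H i j Hi Hj; unfold tr; symmetry; apply H; assumption. Qed.

Lemma mvec_ext n A x y i : (forall j, (j < n)%nat -> x j = y j) -> mvec n A x i = mvec n A y i.
Proof. intros H; apply rsum_ext; intros; rewrite H by assumption; reflexivity. Qed.

Lemma mvec_mat_eq m n A B x i :
  mat_eq m n A B -> (i < m)%nat -> mvec n A x i = mvec n B x i.
Proof. intros H Hi; apply rsum_ext; intros; rewrite H by assumption; reflexivity. Qed.

Lemma mvec_madd n A B x i : mvec n (madd A B) x i = mvec n A x i + mvec n B x i.
Proof. unfold mvec, madd; rewrite <- rsum_plus; apply rsum_ext; intros; ring. Qed.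

Lemma mvec_mopp n A x i : mvec n (mopp A) x i = - mvec n A x i.
Proof.
  unfold mvec, mopp; rewrite <- (Rmult_1_l (rsum n (fun j => A i j * x j))), Ropp_mult_distr_l.
  rewrite <- rsum_scal.
  apply rsum_ext; intros; ring.
Qed.

Lemma mvec_mmul k n A B x i : mvec n (mmul k A B) x i = mvec k A (mvec n B x) i.
Proof.
  unfold mvec, mmul.
  rewrite (rsum_ext k _ (fun l => rsum n (fun j => A i l * (B l j * x j))))
    by (intros; rewrite <- rsum_scal; reflexivity).
  rewrite <- rsum_swap; apply rsum_ext; intros.
  rewrite Rmult_comm, <- rsum_scal; apply rsum_ext; intros; ring.
Qed.

Lemma mvec_outer n f g x i : mvec n (outer f g) x i = f i * dot n g x.
Proof. unfold mvec, outer, dot; rewrite <- rsum_scal; apply rsum_ext; intros; ring. Qed.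

Lemma mvec_outer_vscale n f g x : mvec n (outer f g) x = vscale (dot n g x) f.
Proof. apply functional_extensionality; intros; rewrite mvec_outer; unfold vscale; ring. Qed.

Lemma mvec_diagonal n D x i : diagonal n D -> (i < n)%nat -> mvec n D x i = D i i * x i.
Proof. intros HD Hi; apply (rsum_single n i); auto; intros; rewrite HD by auto; ring. Qed.

Lemma mvec_mmul_diagonal p q D I w b : diagonal p D -> (b < p)%nat ->
  mvec q (mmul p D I) w b = D b b * mvec q I w b.
Proof. intros HD Hb; rewrite mvec_mmul, mvec_diagonal by assumption; reflexivity. Qed.

Lemma mvec_symm n A x i : is_symm n A -> (i < n)%nat -> mvec n (tr A) x i = mvec n A x i.
Proof. intros HA Hi; apply rsum_ext; intros; unfold tr; rewrite HA by assumption; reflexivity. Qed.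

Lemma mvec_vscale n A c x i : mvec n A (vscale c x) i = c * mvec n A x i.
Proof. unfold mvec, vscale; rewrite <- rsum_scal; apply rsum_ext; intros; ring. Qed.

Lemma mvec_vsub n A x y i : mvec n A (vsub x y) i = mvec n A x i - mvec n A y i.
Proof.
  unfold vsub, mvec, vadd, vopp; rewrite <- rsum_minus; apply rsum_ext; intros; ring.
Qed.

Lemma mvec_kdelta n A k i : (k < n)%nat -> mvec n A (kdelta k) i = A i k.
Proof.
  intros Hk; unfold mvec; rewrite (rsum_ext n _ (fun j => kdelta k j * A i j)) by (intros; ring).
  apply rsum_kdelta, Hk.
Qed.

Lemma dot_mvec_tr m n x A y : dot m x (mvec n A y) = dot n y (mvec m (tr A) x).
Proof.
  unfold dot, mvec, tr.
  rewrite (rsum_ext m _ (fun i => rsum n (fun j => x i * (A i j * y j))))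
    by (intros; rewrite <- rsum_scal; reflexivity).
  rewrite rsum_swap; apply rsum_ext; intros.
  rewrite <- rsum_scal; apply rsum_ext; intros; ring.
Qed.

Lemma dot_mvec_adjoint p q A B x y :
  mat_eq q p B (tr A) -> dot q y (mvec p B x) = dot p x (mvec q A y).
Proof.
  intros HB; rewrite dot_mvec_tr; unfold dot; apply rsum_ext; intros.
  f_equal; apply rsum_ext; intros; unfold tr; rewrite HB by assumption; reflexivity.
Qed.

Lemma dot_mvec_sym n A x y : dot n x (mvec n (msym A) y) = dot n y (mvec n (msym A) x).
Proof.
  rewrite dot_mvec_tr; unfold dot, msym; apply rsum_ext; intros; f_equal.
  apply rsum_ext; intros; unfold madd, tr; ring.
Qed.

Lemma qform_mat_eq n A B x : mat_eq n n A B -> qform n A x = qform n B x.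
Proof.
  intros H; unfold qform, bform, dot; apply rsum_ext; intros.
  rewrite (mvec_mat_eq n n A B) by assumption; reflexivity.
Qed.

Lemma qform_madd n A B x : qform n (madd A B) x = qform n A x + qform n B x.
Proof.
  unfold qform, bform, dot; rewrite <- rsum_plus; apply rsum_ext; intros.
  rewrite mvec_madd; ring.
Qed.

Lemma qform_mscale n c A x : qform n (mscale c A) x = c * qform n A x.
Proof.
  unfold qform, bform, dot; rewrite <- rsum_scal; apply rsum_ext; intros i _.
  unfold mvec, mscale.
  rewrite (rsum_ext n _ (fun j => c * (A i j * x j))) by (intros; ring).
  rewrite rsum_scal; ring.
Qed.

Lemma qform_outer n f g x : qform n (outer f g) x = dot n f x * dot n g x.
Proof.
  unfold qform, bform; rewrite (Rmult_comm (dot n f x)), (dot_comm n f x).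
  unfold dot at 1 3; rewrite <- rsum_scal; apply rsum_ext; intros; rewrite mvec_outer; ring.
Qed.

Lemma qform_tr_mmul m n C x : qform m (mmul n (tr C) C) x = dot n (mvec m C x) (mvec m C x).
Proof.
  unfold qform, bform.
  transitivity (dot m x (mvec n (tr C) (mvec m C x))).
  - unfold dot; apply rsum_ext; intros; rewrite mvec_mmul; reflexivity.
  - rewrite dot_mvec_tr; reflexivity.
Qed.

Lemma qform_rank_one_update m k c M Mt S x : (k < m)%nat ->
  mat_eq m m M (madd Mt (mscale c (mmul m (tr (mmul m (unitm k k) S)) (mmul m (unitm k k) S)))) ->
  qform m M x = qform m Mt x + c * (dot m (S k) x * dot m (S k) x).
Proof.
  intros Hk HM.
  rewrite (qform_mat_eq m M _ x HM).
  rewrite qform_madd, qform_mscale, qform_tr_mmul, mmul_unitm_l, mvec_outer_vscale by exact Hk.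
  rewrite dot_vscale, (dot_comm m (vscale _ _)), dot_vscale, dot_kdelta, kdelta_eq by exact Hk.
  ring.
Qed.

Definition wdot (n : nat) (W : mat) (x y : vec) : R := rsum n (fun i => W i i * (x i * y i)).

Lemma wdot_comm n W x y : wdot n W x y = wdot n W y x.
Proof. unfold wdot; apply rsum_ext; intros; ring. Qed.

Lemma wdot_vsub_l n W x y z : wdot n W (vsub x y) z = wdot n W x z - wdot n W y z.
Proof. unfold wdot, vsub, vadd, vopp; rewrite <- rsum_minus; apply rsum_ext; intros; ring. Qed.

Lemma wdot_vsub_r n W x y z : wdot n W z (vsub x y) = wdot n W z x - wdot n W z y.
Proof. rewrite !(wdot_comm n W z); apply wdot_vsub_l. Qed.

Lemma wdot_nonneg n W x : (forall i, (i < n)%nat -> 0 < W i i) -> 0 <= wdot n W x x.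
Proof.
  intros HW; apply rsum_nonneg; intros i Hi.
  apply Rmult_le_pos; [apply Rlt_le, HW, Hi | apply Rle_0_sqr].
Qed.

Lemma qform_diagonal n D x : diagonal n D -> qform n D x = wdot n D x x.
Proof.
  intros HD; unfold qform, bform, dot, wdot; apply rsum_ext; intros.
  rewrite mvec_diagonal by assumption; ring.
Qed.

Lemma wdot_mvec n W x y : diagonal n W -> wdot n W x y = dot n x (mvec n W y).
Proof.
  intros HW; unfold wdot, dot; apply rsum_ext; intros.
  rewrite mvec_diagonal by assumption; ring.
Qed.

Lemma wdot_adjoint p q W W' I J x y : diagonal p W -> diagonal q W' ->
  mat_eq q p (mmul q W' J) (tr (mmul p W I)) ->
  wdot p W x (mvec q I y) = wdot q W' y (mvec p J x).
Proof.
  intros HW HW' HJ.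
  rewrite !wdot_mvec by assumption.
  transitivity (dot p x (mvec q (mmul p W I) y)).
  - unfold dot; apply rsum_ext; intros; rewrite mvec_mmul; reflexivity.
  - rewrite <- (dot_mvec_adjoint p q (mmul p W I) (mmul q W' J)) by assumption.
    unfold dot; apply rsum_ext; intros; rewrite mvec_mmul; reflexivity.
Qed.

Lemma qform_interp_defect p q W W' I J x : diagonal p W -> diagonal q W' ->
  mat_eq q p (mmul q W' J) (tr (mmul p W I)) ->
  qform p (mmul p W (madd idm (mopp (mmul q I J)))) x
  = wdot p W x x - wdot q W' (mvec p J x) (mvec p J x).
Proof.
  intros HW HW' HJ.
  rewrite <- (wdot_adjoint p q W W' I J) by assumption.
  rewrite <- wdot_vsub_r, wdot_mvec by assumption.
  unfold qform, bform, dot; apply rsum_ext; intros i Hi; f_equal.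
  rewrite mvec_mmul; apply mvec_ext; intros j Hj; unfold vsub, vadd, vopp.
  rewrite mvec_madd, mvec_mopp, mvec_mmul, mvec_diagonal by (apply diagonal_idm || assumption).
  unfold idm; rewrite Nat.eqb_refl; ring.
Qed.

Lemma wdot_quadratic_nonneg n W A C s w :
  (forall i, (i < n)%nat -> 0 < W i i) -> 0 < A -> 1 <= 4 * A * C ->
  0 <= A * wdot n W s s - wdot n W s w + C * wdot n W w w.
Proof.
  intros HW HA HC; unfold wdot; rewrite <- !rsum_scal, <- rsum_minus, <- rsum_plus.
  apply rsum_nonneg; intros i Hi.
  assert (HWi := HW i Hi).
  assert (Hinv : / (4 * A) <= C).
  { apply (Rmult_le_reg_l (4 * A)); [lra|]; rewrite Rinv_r; lra. }
  assert (Hsq : 0 <= W i i * (A * (s i - w i / (2 * A)) ^ 2 + (C - / (4 * A)) * w i ^ 2)).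
  { apply Rmult_le_pos; [lra|]. apply Rplus_le_le_0_compat.
    - apply Rmult_le_pos; [lra | apply pow2_ge_0].
    - apply Rmult_le_pos; [lra | apply pow2_ge_0]. }
  replace (A * (W i i * (s i * s i)) - W i i * (s i * w i) + C * (W i i * (w i * w i)))
    with (W i i * (A * (s i - w i / (2 * A)) ^ 2 + (C - / (4 * A)) * w i ^ 2)) by (field; lra).
  exact Hsq.
Qed.

(* The x-index is the outer one: [z (a * p + b)] is the value of [z] at node (a, b). *)
Definition xline (p : nat) (z : vec) (b : nat) : vec := fun a => z (a * p + b)%nat.

Definition yline (p : nat) (z : vec) (a : nat) : vec := fun b => z (a * p + b)%nat.

Lemma block_index m p i :
  (i < m * p)%nat -> exists a b, (a < m)%nat /\ (b < p)%nat /\ i = (a * p + b)%nat.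
Proof.
  intros Hi; assert (p <> 0%nat) by (intros ->; lia).
  exists (i / p)%nat, (i mod p)%nat; split; [|split].
  - apply Nat.Div0.div_lt_upper_bound; lia.
  - apply Nat.mod_upper_bound; assumption.
  - rewrite (Nat.div_mod_eq i p) at 1; lia.
Qed.

Lemma kron_block p q A B a b c d : (b < p)%nat -> (d < q)%nat ->
  kron p q A B (a * p + b)%nat (c * q + d)%nat = A a c * B b d.
Proof.
  intros Hb Hd; unfold kron.
  rewrite !Nat.div_add_l, !Nat.div_small, !Nat.add_0_r by lia.
  rewrite !(Nat.add_comm (_ * _)), !Nat.Div0.mod_add, !Nat.mod_small by lia.
  reflexivity.
Qed.

Lemma mvec_kron m p q A B y a b : (b < p)%nat ->
  mvec (m * q) (kron p q A B) y (a * p + b)%nat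
  = rsum m (fun c => A a c * mvec q B (yline q y c) b).
Proof.
  intros Hb; unfold mvec; rewrite rsum_mul; apply rsum_ext; intros c _.
  rewrite <- rsum_scal; apply rsum_ext; intros d Hd.
  rewrite kron_block by assumption; unfold yline; ring.
Qed.

Lemma mvec_kron_diagonal m p A D y a b : diagonal p D -> (b < p)%nat ->
  mvec (m * p) (kron p p A D) y (a * p + b)%nat = D b b * mvec m A (xline p y b) a.
Proof.
  intros HD Hb; rewrite mvec_kron by assumption.
  rewrite (rsum_ext m _ (fun c => D b b * (A a c * xline p y b c)))
    by (intros; rewrite mvec_diagonal by assumption; unfold yline, xline; ring).
  apply rsum_scal.
Qed.

Lemma mvec_kron_outer m p q f g B y a b : (b < p)%nat ->
  mvec (m * q) (kron p q (outer f g) B) y (a * p + b)%nat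
  = f a * mvec q B (fun d => dot m g (xline q y d)) b.
Proof.
  intros Hb; rewrite mvec_kron by assumption; unfold outer, mvec, dot, yline, xline.
  rewrite (rsum_ext m _
      (fun c => rsum q (fun d => f a * (B b d * (g c * y (c * q + d)%nat)))))
    by (intros; rewrite <- !rsum_scal; apply rsum_ext; intros; ring).
  rewrite rsum_swap, <- rsum_scal; apply rsum_ext; intros.
  rewrite !rsum_scal; ring.
Qed.

Lemma mvec_kron_outer_kdelta m p q j f B y a b : (j < m)%nat -> (b < p)%nat ->
  mvec (m * q) (kron p q (outer f (kdelta j)) B) y (a * p + b)%nat
  = f a * mvec q B (yline q y j) b.
Proof.
  intros Hj Hb; rewrite mvec_kron_outer by assumption; f_equal.
  apply mvec_ext; intros; rewrite dot_kdelta by assumption; reflexivity.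
Qed.

Lemma xline_vadd p x y b : xline p (vadd x y) b = vadd (xline p x b) (xline p y b).
Proof. reflexivity. Qed.

Lemma xline_vopp p x b : xline p (vopp x) b = vopp (xline p x b).
Proof. reflexivity. Qed.

Lemma xline_vscale p c x b : xline p (vscale c x) b = vscale c (xline p x b).
Proof. reflexivity. Qed.

Lemma xline_vsub p x y b : xline p (vsub x y) b = vsub (xline p x b) (xline p y b).
Proof. reflexivity. Qed.

Lemma mvec_kron_idm m p A z a b : (b < p)%nat ->
  mvec (m * p) (kron p p A idm) z (a * p + b)%nat = mvec m A (xline p z b) a.
Proof.
  intros Hb; rewrite mvec_kron_diagonal by (apply diagonal_idm || assumption).
  unfold idm; rewrite Nat.eqb_refl; ring.
Qed.

Lemma xline_kron_idm m p A z b : (b < p)%nat ->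
  xline p (mvec (m * p) (kron p p A idm) z) b = mvec m A (xline p z b).
Proof. intros Hb; apply functional_extensionality; intros; apply mvec_kron_idm, Hb. Qed.

Lemma xline_kron_outer_kdelta m p q j f B y b : (j < m)%nat -> (b < p)%nat ->
  xline p (mvec (m * q) (kron p q (outer f (kdelta j)) B) y) b
  = vscale (mvec q B (yline q y j) b) f.
Proof.
  intros Hj Hb; apply functional_extensionality; intros a; unfold xline, vscale.
  rewrite mvec_kron_outer_kdelta by assumption; ring.
Qed.

Lemma mvec_yline_kron_idm m q A B z c i :
  mvec q B (yline q (mvec (m * q) (kron q q A idm) z) c) i
  = mvec q B (fun d => mvec m A (xline q z d) c) i.
Proof. apply mvec_ext; intros; apply mvec_kron_idm; assumption. Qed.

Lemma dot_kdelta_xline m p k x : (k < m)%nat ->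
  (fun b => dot m (kdelta k) (xline p x b)) = yline p x k.
Proof.
  intros Hk; apply functional_extensionality; intros.
  rewrite dot_kdelta by exact Hk; reflexivity.
Qed.

Lemma qform_kron_diagonal m p A D x : diagonal p D ->
  qform (m * p) (kron p p A D) x = rsum p (fun b => D b b * qform m A (xline p x b)).
Proof.
  intros HD; unfold qform, bform, dot at 1; rewrite rsum_mul.
  rewrite (rsum_ext m _
      (fun a => rsum p (fun b => D b b * (xline p x b a * mvec m A (xline p x b) a))))
    by (intros; apply rsum_ext; intros; rewrite mvec_kron_diagonal by assumption;
        unfold xline; ring).
  rewrite rsum_swap; apply rsum_ext; intros; apply rsum_scal.
Qed.

Lemma qform_kron_outer m p f g D x : diagonal p D ->
  qform (m * p) (kron p p (outer f g) D) x
  = wdot p D (fun b => dot m f (xline p x b)) (fun b => dot m g (xline p x b)).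
Proof.
  intros HD; rewrite qform_kron_diagonal by exact HD.
  unfold wdot; apply rsum_ext; intros; rewrite qform_outer; reflexivity.
Qed.

Lemma bform_kron_outer m n p q f g B x y :
  bform (m * p) (n * q) x (kron p q (outer f g) B) y
  = rsum p (fun b => dot m f (xline p x b) * mvec q B (fun d => dot n g (xline q y d)) b).
Proof.
  unfold bform, dot at 1; rewrite rsum_mul.
  set (w := fun b => mvec q B (fun d => dot n g (xline q y d)) b).
  rewrite (rsum_ext m _ (fun a => rsum p (fun b => w b * (f a * xline p x b a))))
    by (intros; apply rsum_ext; intros; rewrite mvec_kron_outer by assumption;
        unfold w, xline; ring).
  rewrite rsum_swap; apply rsum_ext; intros; rewrite rsum_scal; unfold dot; ring.
Qed.

Lemma bform_kron_outer_diagonal m n p q f g D I x y : diagonal p D ->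
  bform (m * p) (n * q) x (kron p q (outer f g) (mmul p D I)) y
  = wdot p D (fun b => dot m f (xline p x b)) (mvec q I (fun d => dot n g (xline q y d))).
Proof.
  intros HD; rewrite bform_kron_outer; unfold wdot; apply rsum_ext; intros.
  rewrite mvec_mmul_diagonal by assumption; ring.
Qed.

Lemma rsum_deriv n (f : nat -> R -> R) f' t :
  (forall i, (i < n)%nat -> derivable_pt_lim (f i) t (f' i)) ->
  derivable_pt_lim (fun s => rsum n (fun i => f i s)) t (rsum n f').
Proof.
  induction n as [|n IH]; intros H; simpl.
  - apply derivable_pt_lim_const.
  - apply derivable_pt_lim_plus; [apply IH; intros|]; apply H; lia.
Qed.

Lemma bform_deriv m n A (x y : R -> vec) x' y' t :
  (forall i, (i < m)%nat -> derivable_pt_lim (fun s => x s i) t (x' i)) ->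
  (forall j, (j < n)%nat -> derivable_pt_lim (fun s => y s j) t (y' j)) ->
  derivable_pt_lim (fun s => bform m n (x s) A (y s)) t
    (dot m x' (mvec n A (y t)) + dot n y' (mvec m (tr A) (x t))).
Proof.
  intros Hx Hy.
  rewrite <- dot_mvec_tr; unfold dot; rewrite <- rsum_plus.
  apply (rsum_deriv m (fun i s => x s i * mvec n A (y s) i)); intros i Hi.
  replace (x' i * mvec n A (y t) i + x t i * mvec n A y' i)
    with (x' i * mvec n A (y t) i + x t i * rsum n (fun j => A i j * y' j)) by reflexivity.
  apply derivable_pt_lim_mult; [apply Hx, Hi|].
  apply (rsum_deriv n (fun j s => A i j * y s j)); intros j Hj.
  apply derivable_pt_lim_scal, Hy, Hj.
Qed.

Lemma qform_deriv n A (x : R -> vec) x' t :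
  (forall i, (i < n)%nat -> derivable_pt_lim (fun s => x s i) t (x' i)) ->
  derivable_pt_lim (fun s => qform n A (x s)) t (dot n x' (mvec n (msym A) (x t))).
Proof.
  intros Hx.
  replace (dot n x' (mvec n (msym A) (x t)))
    with (dot n x' (mvec n A (x t)) + dot n x' (mvec n (tr A) (x t))).
  - apply bform_deriv; assumption.
  - unfold dot, msym; rewrite <- rsum_plus; apply rsum_ext; intros; rewrite mvec_madd; ring.
Qed.

Section TwoBlocks.

Variables (nxL nyL nxR nyR : nat) (HxL HyL HxR HyR MxL MxR SxL SxR IF2C IC2F : mat) (tau : R).
Hypotheses (HnxL : (0 < nxL)%nat) (HnxR : (0 < nxR)%nat).
Hypotheses (HHxL : is_diag_pd nxL HxL) (HHxR : is_diag_pd nxR HxR).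
Hypotheses (HHyL : is_diag_pd nyL HyL) (HHyR : is_diag_pd nyR HyR).
Hypotheses (HMxL_symm : is_symm nxL MxL) (HMxR_symm : is_symm nxR MxR).
Hypothesis HI : mat_eq nyR nyL (mmul nyR HyR IC2F) (tr (mmul nyL HyL IF2C)).

Local Notation kL := (nxL - 1)%nat.
Local Notation NL := (nxL * nyL)%nat.
Local Notation NR := (nxR * nyR)%nat.

Let HkL : (kL < nxL)%nat. Proof. lia. Qed.
Let HxL_diag : diagonal nxL HxL := proj1 HHxL.
Let HxR_diag : diagonal nxR HxR := proj1 HHxR.
Let HyL_diag : diagonal nyL HyL := proj1 HHyL.
Let HyR_diag : diagonal nyR HyR := proj1 HHyR.

(* The paper's [E_0L u] and [E_0L S_xL u] on the interface, and likewise for [v]. *)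
Definition trace_u (u : vec) : vec := yline nyL u kL.
Definition trace_v (v : vec) : vec := yline nyR v 0%nat.
Definition flux_u (u : vec) : vec := fun b => dot nxL (SxL kL) (xline nyL u b).
Definition flux_v (v : vec) : vec := fun d => dot nxR (SxR 0%nat) (xline nyR v d).

Lemma energy_block u ut v vt :
  energy nxL nyL nxR nyR HxL HyL HxR HyR MxL MxR SxL SxR IF2C IC2F tau u ut v vt
  = rsum nyL (fun b => HyL b b * qform nxL HxL (xline nyL ut b))
  + rsum nyR (fun d => HyR d d * qform nxR HxR (xline nyR vt d))
  + rsum nyL (fun b => HyL b b * qform nxL MxL (xline nyL u b))
  - wdot nyL HyL (trace_u u) (flux_u u)
  + tau * wdot nyL HyL (trace_u u) (trace_u u)
  + rsum nyR (fun d => HyR d d * qform nxR MxR (xline nyR v d))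
  + wdot nyR HyR (trace_v v) (flux_v v)
  + tau * wdot nyR HyR (trace_v v) (trace_v v)
  + wdot nyL HyL (flux_u u) (mvec nyR IF2C (trace_v v))
  - wdot nyR HyR (flux_v v) (mvec nyL IC2F (trace_u u))
  - 2 * tau * wdot nyL HyL (trace_u u) (mvec nyR IF2C (trace_v v)).
Proof.
  unfold energy, ERL, E0L, E0R, ELR; cbv zeta.
  rewrite tr_unitm, !mmul_unitm_l, !mmul_tr_unitm by assumption; rewrite !unitm_outer.
  rewrite !qform_kron_outer, !bform_kron_outer_diagonal, !qform_kron_diagonal by assumption.
  rewrite !dot_kdelta_xline by assumption.
  reflexivity.
Qed.

Variables (cL cR : R) (MtL MtR : mat).
Hypothesis HMxL_split : mat_eq nxL nxL MxL
  (madd MtL (mscale cL (mmul nxL (tr (mmul nxL (E0L nxL) SxL)) (mmul nxL (E0L nxL) SxL)))).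
Hypothesis HMxR_split : mat_eq nxR nxR MxR
  (madd MtR (mscale cR (mmul nxR (tr (mmul nxR E0R SxR)) (mmul nxR E0R SxR)))).

(* Completing the square at each interface node; the unused [tau]-terms are the
   interpolation defects of (iii). *)
Lemma energy_split u ut v vt :
  let jump_u := vsub (trace_u u) (mvec nyR IF2C (trace_v v)) in
  let jump_v := vsub (mvec nyL IC2F (trace_u u)) (trace_v v) in
  energy nxL nyL nxR nyR HxL HyL HxR HyR MxL MxR SxL SxR IF2C IC2F tau u ut v vt
  = rsum nyL (fun b => HyL b b * qform nxL HxL (xline nyL ut b))
  + rsum nyR (fun d => HyR d d * qform nxR HxR (xline nyR vt d))
  + rsum nyL (fun b => HyL b b * qform nxL MtL (xline nyL u b))
  + rsum nyR (fun d => HyR d d * qform nxR MtR (xline nyR v d))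
  + (cL * wdot nyL HyL (flux_u u) (flux_u u) - wdot nyL HyL (flux_u u) jump_u
     + tau / 2 * wdot nyL HyL jump_u jump_u)
  + (cR * wdot nyR HyR (flux_v v) (flux_v v) - wdot nyR HyR (flux_v v) jump_v
     + tau / 2 * wdot nyR HyR jump_v jump_v)
  + tau / 2 * (qform nyL (mmul nyL HyL (madd idm (mopp (mmul nyR IF2C IC2F)))) (trace_u u)
               + qform nyR (mmul nyR HyR (madd idm (mopp (mmul nyL IC2F IF2C)))) (trace_v v)).
Proof.
  intros jump_u jump_v; subst jump_u jump_v.
  assert (HIt := mat_eq_tr_sym _ _ _ _ HI).
  assert (SplitL : rsum nyL (fun b => HyL b b * qform nxL MxL (xline nyL u b))
    = rsum nyL (fun b => HyL b b * qform nxL MtL (xline nyL u b))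
      + cL * wdot nyL HyL (flux_u u) (flux_u u)).
  { unfold wdot; rewrite <- rsum_scal, <- rsum_plus; apply rsum_ext; intros.
    rewrite (qform_rank_one_update nxL kL cL MxL MtL SxL) by assumption; unfold flux_u; ring. }
  assert (SplitR : rsum nyR (fun d => HyR d d * qform nxR MxR (xline nyR v d))
    = rsum nyR (fun d => HyR d d * qform nxR MtR (xline nyR v d))
      + cR * wdot nyR HyR (flux_v v) (flux_v v)).
  { unfold wdot; rewrite <- rsum_scal, <- rsum_plus; apply rsum_ext; intros.
    rewrite (qform_rank_one_update nxR 0 cR MxR MtR SxR) by assumption; unfold flux_v; ring. }
  rewrite energy_block, SplitL, SplitR.
  rewrite (qform_interp_defect nyL nyR HyL HyR IF2C IC2F) by assumption.
  rewrite (qform_interp_defect nyR nyL HyR HyL IC2F IF2C) by assumption.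
  rewrite !wdot_vsub_l, !wdot_vsub_r.
  rewrite (wdot_comm nyL HyL (trace_u u) (flux_u u)),
    (wdot_comm nyL HyL (mvec nyR IF2C (trace_v v)) (trace_u u)),
    (wdot_comm nyR HyR (trace_v v) (flux_v v)),
    (wdot_comm nyR HyR (mvec nyL IC2F (trace_u u)) (trace_v v)).
  rewrite <- (wdot_adjoint nyL nyR HyL HyR IF2C IC2F (trace_u u) (trace_v v)) by assumption.
  lra.
Qed.

Lemma energy_nonneg u ut v vt :
  is_psd nxL MtL -> is_psd nxR MtR -> 0 < cL -> 0 < cR ->
  1 <= 2 * cL * tau -> 1 <= 2 * cR * tau ->
  is_psd nyL (mmul nyL HyL (madd idm (mopp (mmul nyR IF2C IC2F)))) ->
  is_psd nyR (mmul nyR HyR (madd idm (mopp (mmul nyL IC2F IF2C)))) ->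
  0 <= energy nxL nyL nxR nyR HxL HyL HxR HyR MxL MxR SxL SxR IF2C IC2F tau u ut v vt.
Proof.
  intros HMtL HMtR HcL HcR HtL HtR HPL HPR.
  assert (Htau : 0 <= tau) by nra.
  rewrite energy_split; cbv zeta.
  lazymatch goal with |- 0 <= ?KL + ?KR + ?ML + ?MR + ?QL + ?QR + ?P =>
    enough (0 <= KL /\ 0 <= KR /\ 0 <= ML /\ 0 <= MR /\ 0 <= QL /\ 0 <= QR /\ 0 <= P) by lra
  end.
  repeat split.
  - apply rsum_nonneg; intros b Hb; apply Rmult_le_pos; [apply Rlt_le, HHyL, Hb|].
    rewrite qform_diagonal by exact HxL_diag; apply wdot_nonneg, (proj2 HHxL).
  - apply rsum_nonneg; intros d Hd; apply Rmult_le_pos; [apply Rlt_le, HHyR, Hd|].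
    rewrite qform_diagonal by exact HxR_diag; apply wdot_nonneg, (proj2 HHxR).
  - apply rsum_nonneg; intros b Hb; apply Rmult_le_pos; [apply Rlt_le, HHyL, Hb | apply HMtL].
  - apply rsum_nonneg; intros d Hd; apply Rmult_le_pos; [apply Rlt_le, HHyR, Hd | apply HMtR].
  - apply wdot_quadratic_nonneg; [apply HHyL | exact HcL | lra].
  - apply wdot_quadratic_nonneg; [apply HHyR | exact HcR | lra].
  - apply Rmult_le_pos; [lra|]; apply Rplus_le_le_0_compat; [apply HPL | apply HPR].
Qed.

(* The coefficient of [u_t] in [dE/dt] when [u_tt = r]; [grad_v] likewise for [v_t]. *)
Definition grad_u (u v r : vec) : vec :=
  vsub (vsub (vadd (vadd (vsub (vadd
    (mvec NL (msym (kron nyL nyL HxL HyL)) r)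
    (mvec NL (msym (kron nyL nyL MxL HyL)) u))
    (mvec NL (msym (kron nyL nyL (mmul nxL (E0L nxL) SxL) HyL)) u))
    (vscale tau (mvec NL (msym (kron nyL nyL (E0L nxL) HyL)) u)))
    (mvec NR (kron nyL nyR (mmul nxL (tr SxL) (ELR nxL)) (mmul nyL HyL IF2C)) v))
    (mvec NR (tr (kron nyR nyL (mmul nxR (tr SxR) (ERL nxL)) (mmul nyR HyR IC2F))) v))
    (vscale (2 * tau) (mvec NR (kron nyL nyR (ELR nxL) (mmul nyL HyL IF2C)) v)).

Definition grad_v (u v r : vec) : vec :=
  vsub (vsub (vadd (vadd (vadd (vadd
    (mvec NR (msym (kron nyR nyR HxR HyR)) r)
    (mvec NR (msym (kron nyR nyR MxR HyR)) v))
    (mvec NR (msym (kron nyR nyR (mmul nxR E0R SxR) HyR)) v))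
    (vscale tau (mvec NR (msym (kron nyR nyR E0R HyR)) v)))
    (mvec NL (tr (kron nyL nyR (mmul nxL (tr SxL) (ELR nxL)) (mmul nyL HyL IF2C))) u))
    (mvec NL (kron nyR nyL (mmul nxR (tr SxR) (ERL nxL)) (mmul nyR HyR IC2F)) u))
    (vscale (2 * tau) (mvec NL (tr (kron nyL nyR (ELR nxL) (mmul nyL HyL IF2C))) u)).

Lemma energy_deriv (u ut v vt : R -> vec) ru rv t :
  (forall i, (i < NL)%nat -> derivable_pt_lim (fun s => u s i) t (ut t i)) ->
  (forall i, (i < NL)%nat -> derivable_pt_lim (fun s => ut s i) t (ru i)) ->
  (forall i, (i < NR)%nat -> derivable_pt_lim (fun s => v s i) t (vt t i)) ->
  (forall i, (i < NR)%nat -> derivable_pt_lim (fun s => vt s i) t (rv i)) ->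
  derivable_pt_lim
    (fun s => energy nxL nyL nxR nyR HxL HyL HxR HyR MxL MxR SxL SxR IF2C IC2F tau
                (u s) (ut s) (v s) (vt s)) t
    (dot NL (ut t) (grad_u (u t) (v t) ru) + dot NR (vt t) (grad_v (u t) (v t) rv)).
Proof.
  intros Hu Hut Hv Hvt.
  eassert (D : derivable_pt_lim
    (fun s => energy nxL nyL nxR nyR HxL HyL HxR HyR MxL MxR SxL SxR IF2C IC2F tau
                (u s) (ut s) (v s) (vt s)) t _).
  { unfold energy; cbv zeta.
    repeat first [ apply derivable_pt_lim_minus | apply derivable_pt_lim_plus
                 | apply derivable_pt_lim_scal | apply qform_deriv | apply bform_deriv
                 | exact Hu | exact Hut | exact Hv | exact Hvt ]. }
  lazymatch type of D with derivable_pt_lim _ _ ?V =>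
    replace (dot NL (ut t) (grad_u (u t) (v t) ru) + dot NR (vt t) (grad_v (u t) (v t) rv))
      with V; [exact D|]
  end.
  unfold grad_u, grad_v.
  repeat rewrite ?dot_vsub, ?dot_vadd, ?dot_vscale.
  rewrite (dot_mvec_sym NL (kron nyL nyL HxL HyL) (ut t)),
    (dot_mvec_sym NR (kron nyR nyR HxR HyR) (vt t)).
  lra.
Qed.

Lemma rhs_u_block u v a b : (a < nxL)%nat -> (b < nyL)%nat ->
  HxL a a * rhs_u nxL nyL nxR nyR HxL MxL SxL SxR IF2C tau u v (a * nyL + b)%nat
  = - mvec nxL MxL (xline nyL u b) a + kdelta kL a * flux_u u b
    + / 2 * SxL kL a * (trace_u u b - mvec nyR IF2C (trace_v v) b)
    - tau * kdelta kL a * (trace_u u b - mvec nyR IF2C (trace_v v) b)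
    - / 2 * kdelta kL a * (flux_u u b - mvec nyR IF2C (flux_v v) b).
Proof.
  intros Ha Hb.
  assert (HH : HxL a a <> 0) by (apply Rgt_not_eq, HHxL, Ha).
  (* On the x-line through [b], every [kron _ _ A idm] acts as [A]. *)
  change (rhs_u nxL nyL nxR nyR HxL MxL SxL SxR IF2C tau u v (a * nyL + b)%nat)
    with (xline nyL (rhs_u nxL nyL nxR nyR HxL MxL SxL SxR IF2C tau u v) b a).
  unfold rhs_u, E0L, ELR; cbv zeta.
  rewrite mmul_unitm_l by exact HkL; rewrite !unitm_outer.
  repeat first [ rewrite xline_vadd | rewrite xline_vsub | rewrite xline_vopp | rewrite xline_vscale
               | rewrite xline_kron_idm by exact Hb
               | rewrite xline_kron_outer_kdelta by assumption ].
  rewrite !mvec_outer_vscale, !vadd_apply, !vopp_apply, !vscale_apply, mvec_mmul.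
  rewrite !(mvec_diagonal nxL (diag_inv HxL)) by (apply diagonal_diag_inv || exact Ha).
  rewrite mvec_madd, mvec_mopp, mvec_outer, !mvec_vsub, !mvec_vscale, !mvec_kdelta, !dot_kdelta
    by exact HkL.
  rewrite !mvec_yline_kron_idm, diag_inv_diag.
  unfold flux_u, flux_v, trace_u, trace_v, tr, dot, mvec, xline, yline, vsub, vadd, vopp, vscale.
  field; exact HH.
Qed.

Lemma rhs_v_block u v c d : (c < nxR)%nat -> (d < nyR)%nat ->
  HxR c c * rhs_v nxL nyL nxR nyR HxR MxR SxL SxR IC2F tau u v (c * nyR + d)%nat
  = - mvec nxR MxR (xline nyR v d) c - kdelta 0 c * flux_v v d
    - / 2 * SxR 0%nat c * (trace_v v d - mvec nyL IC2F (trace_u u) d)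
    - tau * kdelta 0 c * (trace_v v d - mvec nyL IC2F (trace_u u) d)
    + / 2 * kdelta 0 c * (flux_v v d - mvec nyL IC2F (flux_u u) d).
Proof.
  intros Hc Hd.
  assert (HH : HxR c c <> 0) by (apply Rgt_not_eq, HHxR, Hc).
  change (rhs_v nxL nyL nxR nyR HxR MxR SxL SxR IC2F tau u v (c * nyR + d)%nat)
    with (xline nyR (rhs_v nxL nyL nxR nyR HxR MxR SxL SxR IC2F tau u v) d c).
  unfold rhs_v, E0R, ERL, ELR; cbv zeta.
  rewrite tr_unitm, mmul_unitm_l by exact HnxR; rewrite !unitm_outer.
  repeat first [ rewrite xline_vadd | rewrite xline_vsub | rewrite xline_vopp | rewrite xline_vscale
               | rewrite xline_kron_idm by exact Hd
               | rewrite xline_kron_outer_kdelta by assumption ].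
  rewrite !mvec_outer_vscale, !vadd_apply, !vopp_apply, !vscale_apply, mvec_mmul.
  rewrite !(mvec_diagonal nxR (diag_inv HxR)) by (apply diagonal_diag_inv || exact Hc).
  rewrite mvec_madd, !mvec_mopp, mvec_outer, !mvec_vsub, !mvec_vscale, !mvec_kdelta, !dot_kdelta
    by exact HnxR.
  rewrite !mvec_yline_kron_idm, diag_inv_diag.
  unfold flux_u, flux_v, trace_u, trace_v, tr, dot, mvec, xline, yline, vsub, vadd, vopp, vscale.
  field; exact HH.
Qed.

Lemma grad_u_rhs u v a b : (a < nxL)%nat -> (b < nyL)%nat ->
  grad_u u v (rhs_u nxL nyL nxR nyR HxL MxL SxL SxR IF2C tau u v) (a * nyL + b)%nat = 0.
Proof.
  intros Ha Hb.
  assert (Hr := rhs_u_block u v a b Ha Hb).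
  set (r := rhs_u nxL nyL nxR nyR HxL MxL SxL SxR IF2C tau u v) in *.
  assert (HIt := mat_eq_tr _ _ _ _ HI).
  unfold grad_u, msym, ERL, E0L, ELR.
  repeat rewrite ?vsub_apply, ?vadd_apply, ?vscale_apply, ?mvec_madd, ?tr_kron.
  rewrite !tr_unitm, mmul_unitm_l, (mmul_tr_unitm nxL kL 0 SxL HkL),
    (mmul_tr_unitm nxR 0 kL SxR HnxR) by assumption.
  rewrite !unitm_outer, !tr_outer.
  rewrite !mvec_kron_diagonal by (assumption || apply diagonal_tr; assumption).
  rewrite !mvec_kron_outer_kdelta, mvec_kron_outer by assumption.
  rewrite !mvec_diagonal by (assumption || apply diagonal_tr; assumption).
  rewrite mvec_symm, !mvec_outer, !dot_kdelta by assumption.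
  rewrite (mvec_mat_eq nyL nyR _ _ _ _ HIt Hb), tr_tr, !mvec_mmul_diagonal by assumption.
  unfold tr, xline; rewrite Hr.
  unfold flux_u, flux_v, trace_u, trace_v, xline, yline; lra.
Qed.

Lemma grad_v_rhs u v c d : (c < nxR)%nat -> (d < nyR)%nat ->
  grad_v u v (rhs_v nxL nyL nxR nyR HxR MxR SxL SxR IC2F tau u v) (c * nyR + d)%nat = 0.
Proof.
  intros Hc Hd.
  assert (Hr := rhs_v_block u v c d Hc Hd).
  set (r := rhs_v nxL nyL nxR nyR HxR MxR SxL SxR IC2F tau u v) in *.
  unfold grad_v, msym, ERL, E0R, ELR.
  repeat rewrite ?vsub_apply, ?vadd_apply, ?vscale_apply, ?mvec_madd, ?tr_kron.
  rewrite !tr_unitm, mmul_unitm_l, (mmul_tr_unitm nxL kL 0 SxL HkL),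
    (mmul_tr_unitm nxR 0 kL SxR HnxR) by assumption.
  rewrite !unitm_outer, !tr_outer.
  rewrite !mvec_kron_diagonal by (assumption || apply diagonal_tr; assumption).
  rewrite !mvec_kron_outer_kdelta, mvec_kron_outer by assumption.
  rewrite !mvec_diagonal by (assumption || apply diagonal_tr; assumption).
  rewrite mvec_symm, !mvec_outer, !dot_kdelta by assumption.
  rewrite <- !(mvec_mat_eq nyR nyL _ _ _ _ HI Hd), !mvec_mmul_diagonal by assumption.
  unfold tr, xline; rewrite Hr.
  unfold flux_u, flux_v, trace_u, trace_v, xline, yline; lra.
Qed.

Lemma energy_conserved (u ut v vt : R -> vec) :
  (forall t i, (i < NL)%nat ->
     derivable_pt_lim (fun s => u s i) t (ut t i) /\
     derivable_pt_lim (fun s => ut s i) t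
       (rhs_u nxL nyL nxR nyR HxL MxL SxL SxR IF2C tau (u t) (v t) i)) ->
  (forall t i, (i < NR)%nat ->
     derivable_pt_lim (fun s => v s i) t (vt t i) /\
     derivable_pt_lim (fun s => vt s i) t
       (rhs_v nxL nyL nxR nyR HxR MxR SxL SxR IC2F tau (u t) (v t) i)) ->
  forall t, derivable_pt_lim
    (fun s => energy nxL nyL nxR nyR HxL HyL HxR HyR MxL MxR SxL SxR IF2C IC2F tau
                (u s) (ut s) (v s) (vt s)) t 0.
Proof.
  intros Hu Hv t.
  replace 0 with
    (dot NL (ut t) (grad_u (u t) (v t)
                      (rhs_u nxL nyL nxR nyR HxL MxL SxL SxR IF2C tau (u t) (v t)))
     + dot NR (vt t) (grad_v (u t) (v t)
                      (rhs_v nxL nyL nxR nyR HxR MxR SxL SxR IC2F tau (u t) (v t)))).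
  - apply energy_deriv; intros i Hi; first [apply (Hu t i Hi) | apply (Hv t i Hi)].
  - rewrite !dot_eq0; [ring | |]; intros i Hi;
      destruct (block_index _ _ _ Hi) as (a & b & Ha & Hb & ->);
      [apply grad_v_rhs | apply grad_u_rhs]; assumption.
Qed.

End TwoBlocks.

Lemma one_le_mul_of_inv_le c t : 0 < c -> 1 / c <= t -> 1 <= c * t.
Proof.
  intros Hc Ht; apply (Rmult_le_compat_l c) in Ht; [|lra].
  replace (c * (1 / c)) with 1 in Ht by (field; lra); exact Ht.
Qed.

Theorem mainTheorem3
  (nxL nyL nxR nyR : nat) (hxL hxR alpha tau : R)
  (HxL HyL HxR HyR MxL MxR MtL MtR SxL SxR IF2C IC2F : mat)
  (HnxL : (2 <= nxL)%nat) (HnyL : (2 <= nyL)%nat)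
  (HnxR : (2 <= nxR)%nat) (HnyR : (2 <= nyR)%nat)
  (HhxL : 0 < hxL) (HhxR : 0 < hxR)
  (* (i) *)
  (HHxL : is_diag_pd nxL HxL) (HHyL : is_diag_pd nyL HyL)
  (HHxR : is_diag_pd nxR HxR) (HHyR : is_diag_pd nyR HyR)
  (* (ii) *)
  (Halpha : 0 < alpha)
  (HMxLs : is_symm nxL MxL) (HMxRs : is_symm nxR MxR)
  (HMtLs : is_symm nxL MtL) (HMtLp : is_psd nxL MtL)
  (HMtRs : is_symm nxR MtR) (HMtRp : is_psd nxR MtR)
  (HMxL : mat_eq nxL nxL MxL
     (madd MtL (mscale (hxL * alpha)
        (mmul nxL (tr (mmul nxL (E0L nxL) SxL)) (mmul nxL (E0L nxL) SxL)))))
  (HMxR : mat_eq nxR nxR MxR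
     (madd MtR (mscale (hxR * alpha)
        (mmul nxR (tr (mmul nxR E0R SxR)) (mmul nxR E0R SxR)))))
  (* (iii) *)
  (HI : mat_eq nyR nyL (mmul nyR HyR IC2F) (tr (mmul nyL HyL IF2C)))
  (HIL : is_psd nyL (mmul nyL HyL (madd idm (mopp (mmul nyR IF2C IC2F)))))
  (HIR : is_psd nyR (mmul nyR HyR (madd idm (mopp (mmul nyL IC2F IF2C)))))
  (* (iv) *)
  (Htau : Rmax (1 / (2 * alpha * hxL)) (1 / (2 * alpha * hxR)) <= tau) :
  (forall u ut v vt : vec,
     0 <= energy nxL nyL nxR nyR HxL HyL HxR HyR MxL MxR SxL SxR IF2C IC2F tau
            u ut v vt)
  /\
  (forall u ut v vt : R -> vec,
     (forall t i, (i < nxL * nyL)%nat ->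
        derivable_pt_lim (fun s => u s i) t (ut t i) /\
        derivable_pt_lim (fun s => ut s i) t
          (rhs_u nxL nyL nxR nyR HxL MxL SxL SxR IF2C tau (u t) (v t) i)) ->
     (forall t i, (i < nxR * nyR)%nat ->
        derivable_pt_lim (fun s => v s i) t (vt t i) /\
        derivable_pt_lim (fun s => vt s i) t
          (rhs_v nxL nyL nxR nyR HxR MxR SxL SxR IC2F tau (u t) (v t) i)) ->
     forall t : R,
       derivable_pt_lim
         (fun s => energy nxL nyL nxR nyR HxL HyL HxR HyR MxL MxR SxL SxR IF2C IC2F
                     tau (u s) (ut s) (v s) (vt s)) t 0).
Proof.
  assert (HtL : 1 <= 2 * (hxL * alpha) * tau).
  { replace (2 * (hxL * alpha) * tau) with (2 * alpha * hxL * tau) by ring.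
    apply one_le_mul_of_inv_le; [nra|]. exact (Rle_trans _ _ _ (Rmax_l _ _) Htau). }
  assert (HtR : 1 <= 2 * (hxR * alpha) * tau).
  { replace (2 * (hxR * alpha) * tau) with (2 * alpha * hxR * tau) by ring.
    apply one_le_mul_of_inv_le; [nra|]. exact (Rle_trans _ _ _ (Rmax_r _ _) Htau). }
  split.
  - intros u ut v vt.
    apply (energy_nonneg nxL nyL nxR nyR HxL HyL HxR HyR MxL MxR SxL SxR IF2C IC2F tau)
      with (cL := hxL * alpha) (cR := hxR * alpha) (MtL := MtL) (MtR := MtR);
      solve [assumption | lia | nra].
  - apply energy_conserved; solve [assumption | lia].
Qed.
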